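(* Let $n\ge2$, $(a,b)\in\Omega_n$ and $L=L^{(n)}_{(a,b)}$. Then (i) $\mathrm{Orb}(L,\omega^a)=\mathrm{Orb}(L,1)$ if and only if $n/a$ is odd; (ii) $\mathrm{Orb}(L,\omega^bj)=\mathrm{Orb}(L,j)$ if and only if $n/b$ is odd. In particular, $L$ (which is the union of $\mathrm{Orb}(L,1),\mathrm{Orb}(L,\omega^a),\mathrm{Orb}(L,j),\mathrm{Orb}(L,\omega^bj)$) can have two, three or four orbits.
   Context: $\mathbb{H}$ is the real quaternion algebra with basis $1,i,j,k$. For $n\ge2$ let $\omega:=\cos(\pi/n)+i\sin(\pi/n)\in\mathbb{H}$ and $\mathcal{D}_n:=\langle\omega,j\rangle$ (dicyclic group of order $4n$). $\Omega_n:=\{(a,b):1\le a\le b\le n,\ a\mid n,\ b\mid n,\ \gcd(a,b)=1\}$. For $x,y$ in a group put $x\circ y:=xy^{-1}x$; $L(X)$ is the closure of a set $X$ under $\circ$; $L^{(n)}_{(a,b)}:=L(\{1,\omega^a,j,\omega^bj\})$. For $b\in L$, the orbit $\mathrm{Orb}(L,b)$ is the closure of $\{b\}$ under all maps $x\mapsto a\circ x=ax^{-1}a$ with $a\in L$. *)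

From mathcomp Require Import all_boot all_order all_algebra.
Set Implicit Arguments. Unset Strict Implicit. Unset Printing Implicit Defensive.
Import GRing.Theory.
Local Open Scope ring_scope.

(* The dicyclic group D_n = <omega, j> inside the quaternions, in its normal
   form: every element is uniquely omega^k j^e with k in Z/2nZ, e in {0,1}.
   The pair (k, e) encodes omega^k j^e.  The multiplication is the quaternion
   product, computed from  j omega = omega^{-1} j,  j^2 = -1 = omega^n,
   omega^(2n) = 1 (omega = cos(pi/n) + i sin(pi/n)).  For n >= 2, 'Z_(n.*2)
   is exactly Z/2nZ. *)
Definition dic (n : nat) := ('Z_(n.*2) * bool)%type.

(* (omega^k j^e)(omega^m j^f) = omega^(k + (-1)^e m + [e && f] n) j^(e xor f) *)
Definition dmul (n : nat) (x y : dic n) : dic n :=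
  (x.1 + (if x.2 then - y.1 else y.1) + (if x.2 && y.2 then n%:R else 0),
   x.2 (+) y.2).

(* (omega^k)^-1 = omega^-k ; (omega^k j)^-1 = omega^(k+n) j *)
Definition dinv (n : nat) (x : dic n) : dic n :=
  if x.2 then (x.1 + n%:R, true) else (- x.1, false).

Definition d1 (n : nat) : dic n := (0, false).
Definition dom (n : nat) (a : nat) : dic n := (a%:R, false).
Definition dj (n : nat) : dic n := (0, true).
Definition domj (n : nat) (b : nat) : dic n := (b%:R, true).

Definition dcirc (n : nat) (x y : dic n) : dic n := dmul (dmul x (dinv y)) x.

Definition Omega (n a b : nat) : Prop :=
  (1 <= a)%N /\ (a <= b)%N /\ (b <= n)%N /\ (a %| n)%N /\ (b %| n)%N /\ coprime a b.

Inductive Lclos (n : nat) (X : dic n -> Prop) : dic n -> Prop :=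
  | Lclos_base x : X x -> Lclos X x
  | Lclos_step x y : Lclos X x -> Lclos X y -> Lclos X (dcirc x y).

Definition Lab (n a b : nat) : dic n -> Prop :=
  Lclos (fun x => x = d1 n \/ x = dom n a \/ x = dj n \/ x = domj n b).

Inductive Orb (n : nat) (L : dic n -> Prop) (b : dic n) : dic n -> Prop :=
  | Orb_base : Orb L b b
  | Orb_step a x : L a -> Orb L b x -> Orb L b (dcirc a x).

Definition same_set (n : nat) (P Q : dic n -> Prop) : Prop := forall x, P x <-> Q x.

Arguments d1 n : clear implicits.
Arguments dom n a : clear implicits.
Arguments dj n : clear implicits.
Arguments domj n b : clear implicits.
Arguments Lab n a b : clear implicits.

From mathcomp Require Import all_boot all_order all_algebra ring.
Set Implicit Arguments.
Unset Strict Implicit.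
Unset Printing Implicit Defensive.
Import GRing.Theory.
Local Open Scope ring_scope.

(* Write omega^k j^e as (k, e).  Within a coset, (k, e) o (m, e) = (2k - m, e)
   reflects exponents; across cosets, (k, ~~ e) o (m, e) = (m + n, e) shifts
   them by n.  Hence in L the exponents of the rotations are exactly the
   multiples of a and those of the reflections exactly the multiples of b; for
   d = a (resp. b) every multiple of d is reached from 0 or d by one reflection.
   If n/d is even, 2d divides n, so the orbit of (0, e) keeps its exponents in
   2dZ and misses (d, e).  If n/d = 2t + 1, then x = d(t + 1) satisfies
   2x = n + d, so a shift by n followed by the reflection through x exchanges
   the exponents 0 and d. *)

Section ZpDivisibility.
Variable p : nat.
Hypothesis p_gt1 : (1 < p)%N.

Lemma Zp_dvd_mod d m : (d %| p)%N -> (d %| m %% (Zp_trunc p).+2)%N = (d %| m)%N.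
Proof. by move=> dvd_dp; rewrite Zp_cast // /dvdn modn_dvdm. Qed.

Lemma Zp_dvd_nat d k : (d %| p)%N -> (d %| (k%:R : 'Z_p))%N = (d %| k)%N.
Proof. by move=> dvd_dp; rewrite val_Zp_nat // /dvdn modn_dvdm. Qed.

Lemma Zp_dvdD d (x y : 'Z_p) :
  (d %| p)%N -> (d %| x)%N -> (d %| y)%N -> (d %| (x + y)%R)%N.
Proof. by move=> dvd_dp dx dy; rewrite /= Zp_dvd_mod // dvdn_add. Qed.

Lemma Zp_dvdN d (x : 'Z_p) : (d %| p)%N -> (d %| x)%N -> (d %| (- x)%R)%N.
Proof.
by move=> dvd_dp dx; rewrite /= Zp_dvd_mod //; apply: dvdn_sub; rewrite ?Zp_cast.
Qed.

Lemma Zp_dvd_double d (x : 'Z_p) :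
  (2 * d %| p)%N -> (d %| x)%N -> (2 * d %| (x + x)%R)%N.
Proof. by move=> dvd_dp dx; rewrite /= Zp_dvd_mod // addnn -mul2n dvdn_pmul2l. Qed.

End ZpDivisibility.

Section Dicyclic.
Variable n : nat.
Hypothesis n_gt1 : (1 < n)%N.

Let n2_gt1 : (1 < n.*2)%N.
Proof. by rewrite -addnn (leq_trans n_gt1) ?leq_addr. Qed.

Let dvdn_n2 d : (d %| n)%N -> (d %| n.*2)%N.
Proof. by rewrite -muln2 => /dvdn_mulr->. Qed.

Lemma dcircE (k m : 'Z_(n.*2)) e f :
  dcirc (k, e) (m, f) = if e == f then (k - m + k, e) else (m + n%:R, f).
Proof. by case: e; case: f; rewrite /dcirc /dmul /dinv /=; congr pair; ring. Qed.

Lemma dcirc_same (k m : 'Z_(n.*2)) e : dcirc (k, e) (m, e) = (k - m + k, e).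
Proof. by rewrite dcircE eqxx. Qed.

Lemma dcirc_flip (k m : 'Z_(n.*2)) e : dcirc (k, ~~ e) (m, e) = (m + n%:R, e).
Proof. by rewrite dcircE; case: e. Qed.

Lemma Orb_trans (L : dic n -> Prop) x y z : Orb L x y -> Orb L y z -> Orb L x z.
Proof. by move=> Oxy; elim=> // c w Lc _ Oxw; apply: Orb_step. Qed.

Lemma Lclos_Orb (X : dic n -> Prop) x y : Lclos X x -> Orb (Lclos X) x y -> Lclos X y.
Proof. by move=> Lx; elim=> // c w Lc _ Lw; apply: Lclos_step. Qed.

Lemma Lab_dvd a b :
  (a %| n)%N -> (b %| n)%N ->
  forall x, Lab n a b x -> ((if x.2 then b else a) %| x.1)%N.
Proof.
move=> dvd_an dvd_bn x.
have dvd_n e : ((if e then b else a) %| n)%N by case: e.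
elim=> {x} [x | [k e] [m f] _ dk _ dm].
  by case=> [|[|[|]]] ->; rewrite /= ?dvdn0 ?Zp_dvd_nat ?dvdn_n2.
rewrite dcircE; case: eqP dm => [<- | _] dm; cbn [fst snd] in dk, dm |- *.
  by rewrite !Zp_dvdD ?Zp_dvdN ?dvdn_n2.
by rewrite Zp_dvdD ?Zp_dvd_nat ?dvdn_n2.
Qed.

Section CircClosed.
Variable L : dic n -> Prop.
Hypothesis L_circ : forall x y, L x -> L y -> L (dcirc x y).
Variables (e : bool) (d : nat).
Hypotheses (L0 : L (0, e)) (Ld : L (d%:R, e)).

Lemma L_natmul s : L ((d * s)%:R, e).
Proof.
suff L_two : L ((d * s)%:R, e) /\ L ((d * s.+1)%:R, e) by case: L_two.
elim: s => [|s [Ls LsS]]; first by rewrite muln0 muln1.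
have -> : ((d * s.+2)%:R : 'Z_(n.*2)) = (d * s.+1)%:R - (d * s)%:R + (d * s.+1)%:R.
  by rewrite !mulnS !natrD; ring.
by split=> //; rewrite -dcirc_same; apply: L_circ.
Qed.

Lemma Orb_cover (k : 'Z_(n.*2)) :
  (d %| k)%N -> Orb L (0, e) (k, e) \/ Orb L (d%:R, e) (k, e).
Proof.
case/dvdnP=> s k_eq; rewrite -[k]natr_Zp k_eq -(odd_double_half s).
set u := s./2.
have -> : (((odd s + u.*2) * d)%:R : 'Z_(n.*2))
    = (d * (u + odd s))%:R - (d * odd s)%:R + (d * (u + odd s))%:R.
  by rewrite -[u.*2]addnn !natrM !natrD; ring.
rewrite -dcirc_same.
have := Orb_step (L_natmul (u + odd s)) (Orb_base L ((d * odd s)%:R, e)).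
by case: (odd s); rewrite ?muln0 ?muln1; [right | left].
Qed.

Hypothesis L0_flip : L (0, ~~ e).
Hypotheses (d_gt0 : (0 < d)%N) (dvd_dn : (d %| n)%N).
Hypothesis L_dvd : forall k, L (k, e) -> (d %| k)%N.

Lemma Orb0_dvd_double :
  (2 * d %| n)%N -> forall x, Orb L (0, e) x -> x.2 = e /\ (2 * d %| x.1)%N.
Proof.
move=> dvd_2dn x; elim=> {x} [|[k f] [m g] Lc _ [m_e dm]]; first by rewrite dvdn0.
cbn [fst snd] in m_e, dm; subst g.
rewrite dcircE; case: eqP => [Efe | _]; cbn [fst snd]; split=> //.
  rewrite addrAC Zp_dvdD ?Zp_dvdN ?Zp_dvd_double ?dvdn_n2 //.
  by apply: L_dvd; rewrite -Efe.
by rewrite Zp_dvdD ?Zp_dvd_nat ?dvdn_n2.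
Qed.

Lemma Orb_swap :
  odd (n %/ d) -> Orb L (0, e) (d%:R, e) /\ Orb L (d%:R, e) (0, e).
Proof.
move=> odd_nd; set t := (n %/ d)./2.
have nd_eq : (n %/ d = t.*2.+1)%N by rewrite -[LHS]odd_double_half odd_nd.
have twice_x : (d * t.+1 + d * t.+1 = n + d)%N.
  by rewrite -(divnK dvd_dn) nd_eq -addnn; ring.
have reflect_x y : (d * t.+1)%:R - y + (d * t.+1)%:R = n%:R + d%:R - y :> 'Z_(n.*2).
  by rewrite -!natrD -twice_x natrD; ring.
have via_shift y z : dcirc ((d * t.+1)%:R, e) (dcirc (0, ~~ e) (y, e)) = z ->
    Orb L (y, e) z.
  move=> <-; apply: Orb_step; first exact: L_natmul.
  by apply: Orb_step; [exact: L0_flip | exact: Orb_base].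
by split; apply: via_shift; rewrite dcirc_flip dcirc_same reflect_x; congr pair; ring.
Qed.

Lemma Orb_eq_iff_odd : same_set (Orb L (d%:R, e)) (Orb L (0, e)) <-> odd (n %/ d).
Proof.
split=> [same | /Orb_swap [O0d Od0] x].
  apply: contraT => even_nd.
  have dvd_2dn : (2 * d %| n)%N.
    by rewrite -(divnK dvd_dn) dvdn_pmul2r // dvdn2.
  have [_ /=] := Orb0_dvd_double dvd_2dn ((same _).1 (Orb_base _ _)).
  by rewrite Zp_dvd_nat ?dvdn_n2 // gtnNdvd // ltn_Pmull.
by split; apply: Orb_trans.
Qed.

End CircClosed.
End Dicyclic.

Theorem lemma5p6 (n a b : nat) :
  (2 <= n)%N -> Omega n a b ->
  let L := Lab n a b in
  [/\ same_set (Orb L (dom n a)) (Orb L (d1 n)) <-> odd (n %/ a),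
      same_set (Orb L (domj n b)) (Orb L (dj n)) <-> odd (n %/ b)
    & forall x, L x <-> (Orb L (d1 n) x \/ Orb L (dom n a) x \/
                         Orb L (dj n) x \/ Orb L (domj n b) x)].
Proof.
move=> n_gt1 [a_gt0 [le_ab [_ [dvd_an [dvd_bn _]]]]] L.
have L_circ x y : L x -> L y -> L (dcirc x y) by apply: Lclos_step.
have L1 : L (d1 n) by apply: Lclos_base; left.
have La : L (dom n a) by apply: Lclos_base; right; left.
have Lj : L (dj n) by apply: Lclos_base; right; right; left.
have Lb : L (domj n b) by apply: Lclos_base; right; right; right.
have L_dvd := Lab_dvd n_gt1 dvd_an dvd_bn.
have L_dvd_a k : L (k, false) -> (a %| k)%N by move/L_dvd.
have L_dvd_b k : L (k, true) -> (b %| k)%N by move/L_dvd.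
split.
- exact (Orb_eq_iff_odd n_gt1 L_circ L1 La Lj a_gt0 dvd_an L_dvd_a).
- exact (Orb_eq_iff_odd n_gt1 L_circ Lj Lb L1 (leq_trans a_gt0 le_ab) dvd_bn L_dvd_b).
move=> [k e]; split=> [Lx | ]; last by case=> [|[|[|]]]; apply: Lclos_Orb.
case: e Lx => [/L_dvd_b | /L_dvd_a] dvd_k.
  by case: (Orb_cover L_circ Lj Lb dvd_k); auto.
by case: (Orb_cover L_circ L1 La dvd_k); auto.
Qed.
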